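(* Let $A,B$ be quantum systems of dimensions $m_A,m_B$ and $\psi_{AB}$ a bipartite state with $\psi_A=\mathrm{id}_{m_A}/m_A$ and $\psi_B=\mathrm{id}_{m_B}/m_B$, and let $\mathcal{T}:\mathcal{M}(B)\to\mathcal{M}(A)$ be its Markov super-operator. For any $Q\in\mathcal{M}(B)$, the maximum $$\max\{|\mathrm{Tr}((P^\dagger\otimes Q)\psi_{AB})|: P\in\mathcal{M}(A),\ \|P\|'_2=1\}$$ equals $\|\mathcal{T}(Q)\|'_2$, and (when $\mathcal{T}(Q)\ne0$) it is achieved by $P^*=\mathcal{T}(Q)/\|\mathcal{T}(Q)\|'_2$. Consequently $$\rho(\psi_{AB})=\max\{\|\mathcal{T}(Q)\|'_2: Q\in\mathcal{M}(B),\ \mathrm{Tr}Q=0,\ \|Q\|'_2=1\}.$$ Moreover, the supremum defining $\rho(\psi_{AB})$ is achieved by a pair of Hermitian operators $(P,Q)$.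
   Context: $\mathcal{M}(A)$ is the space of linear operators on $A\cong\mathbb{C}^{m_A}$, with inner product $\langle X,Y\rangle=\frac1{m_A}\mathrm{Tr}X^\dagger Y$ and normalized 2-norm $\|X\|'_2=\langle X,X\rangle^{1/2}$ (similarly on $B$ with $1/m_B$). The Markov super-operator $\mathcal{T}:\mathcal{M}(B)\to\mathcal{M}(A)$ is defined by $\mathrm{Tr}((M^\dagger\otimes Q)\psi_{AB})=\langle M,\mathcal{T}(Q)\rangle$ for all $M\in\mathcal{M}(A)$, $Q\in\mathcal{M}(B)$ (equivalently $\mathcal{T}(Q)=m_A\mathrm{Tr}_B((\mathrm{id}\otimes Q)\psi_{AB})$). The maximal correlation is $\rho(\psi_{AB})=\sup\{|\mathrm{Tr}((P^\dagger\otimes Q)\psi_{AB})|: P\in\mathcal{M}(A),Q\in\mathcal{M}(B),\ \mathrm{Tr}P=\mathrm{Tr}Q=0,\ \|P\|'_2=\|Q\|'_2=1\}$. *)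

From HB Require Import structures.
From mathcomp Require Import all_boot all_order all_algebra.
From mathcomp Require Import complex mxtens.
From mathcomp Require Import boolp classical_sets reals.
Set Implicit Arguments. Unset Strict Implicit. Unset Printing Implicit Defensive.
Import Order.TTheory GRing.Theory Num.Theory.
Local Open Scope ring_scope.

Section QDefs.
Variable R : realType.
Local Notation C := R[i].

Definition adjmx {m n} (X : 'M[C]_(m, n)) : 'M[C]_(n, m) :=
  (map_mx (@Num.conj C) X)^T.

Definition is_hermitian {m} (X : 'M[C]_m) : Prop := adjmx X = X.

Definition is_psd {m} (X : 'M[C]_m) : Prop :=
  is_hermitian X /\ forall v : 'cV[C]_m, 0 <= (adjmx v *m X *m v) 0 0.

Definition is_state {m} (X : 'M[C]_m) : Prop := is_psd X /\ \tr X = 1.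

Definition ptraceB {mA mB} (X : 'M[C]_(mA * mB)) : 'M[C]_mA :=
  \matrix_(i, j) \sum_(k < mB) X (mxtens_index (i, k)) (mxtens_index (j, k)).
Definition ptraceA {mA mB} (X : 'M[C]_(mA * mB)) : 'M[C]_mB :=
  \matrix_(i, j) \sum_(k < mA) X (mxtens_index (k, i)) (mxtens_index (k, j)).

Definition nip {m} (X Y : 'M[C]_m) : C := (m%:R)^-1 * \tr (adjmx X *m Y).

(* normalized 2-norm ||X||'_2 = <X,X>^(1/2)  (<X,X> is real nonnegative) *)
Definition norm2' {m} (X : 'M[C]_m) : R := Num.sqrt (complex.Re (nip X X)).

Definition corr {mA mB} (psi : 'M[C]_(mA * mB)) (P : 'M[C]_mA) (Q : 'M[C]_mB) : C :=
  \tr ((adjmx P *t Q) *m psi).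

Definition markovT {mA mB} (psi : 'M[C]_(mA * mB)) (Q : 'M[C]_mB) : 'M[C]_mA :=
  (mA%:R) *: ptraceB ((1%:M *t Q) *m psi).

Definition cabs (z : C) : R := complex.Re `|z|.

Definition maxcorr {mA mB} (psi : 'M[C]_(mA * mB)) : R :=
  sup [set r : R | exists (P : 'M[C]_mA) (Q : 'M[C]_mB),
         [/\ \tr P = 0, \tr Q = 0, norm2' P = 1, norm2' Q = 1
           & r = cabs (corr psi P Q)]].

End QDefs.

From HB Require Import structures.
From mathcomp Require Import all_boot all_order all_algebra.
From mathcomp Require Import complex mxtens.
From mathcomp Require Import boolp classical_sets reals.
From mathcomp Require Import ring lra.
From mathcomp Require Import topology normedtype derive.
Import Order.TTheory GRing.Theory Num.Theory.
Set Implicit Arguments. Unset Strict Implicit. Unset Printing Implicit Defensive.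
Local Open Scope ring_scope.
Import numFieldNormedType.Exports.

(** Since [corr psi P Q = <P, T Q>] for the normalised inner product, Cauchy-Schwarz
    bounds [|corr psi P Q|] by [||T Q||'_2] when [||P||'_2 = 1], with equality at
    [P = T Q / ||T Q||'_2].  Hence [rho(psi)] is the maximum of [||T Q||'_2] over the
    traceless unit sphere of [M(B)], which is attained by compactness.  As [psi] is
    Hermitian, [T] commutes with adjoints; splitting a maximiser as [H1 + i H2] with
    [H1], [H2] traceless Hermitian gives [||Q||^2 = ||H1||^2 + ||H2||^2] and
    [||T Q||^2 = ||T H1||^2 + ||T H2||^2], so by maximality a nonzero [Hk], normalised,
    is a Hermitian maximiser.  Its image under [T], normalised, is a Hermitian partner,
    traceless because [psi_B = id/m_B]. *)

Lemma big_mxtens_index (V : nmodType) m n (F : 'I_(m * n) -> V) :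
  \sum_(a < m * n) F a = \sum_(i < m) \sum_(k < n) F (mxtens_index (i, k)).
Proof.
rewrite pair_big /= (reindex (@mxtens_index m n)) /=; last first.
  by exists (@mxtens_unindex m n) => x _; [apply: mxtens_indexK | apply: mxtens_unindexK].
by apply: eq_bigr => -[i k].
Qed.

Section Adjoint.
Variable R : realType.
Local Notation C := R[i].

Lemma adjmxK m n (X : 'M[C]_(m, n)) : adjmx (adjmx X) = X.
Proof. by apply/matrixP => i j; rewrite !mxE conjCK. Qed.

Lemma adjmxD m n (X Y : 'M[C]_(m, n)) : adjmx (X + Y) = adjmx X + adjmx Y.
Proof. by apply/matrixP => i j; rewrite !mxE rmorphD. Qed.

Lemma adjmxB m n (X Y : 'M[C]_(m, n)) : adjmx (X - Y) = adjmx X - adjmx Y.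
Proof. by apply/matrixP => i j; rewrite !mxE rmorphB. Qed.

Lemma adjmxZ m n (c : C) (X : 'M[C]_(m, n)) : adjmx (c *: X) = c^* *: adjmx X.
Proof. by apply/matrixP => i j; rewrite !mxE rmorphM. Qed.

Lemma adjmxM m n p (X : 'M[C]_(m, n)) (Y : 'M[C]_(n, p)) :
  adjmx (X *m Y) = adjmx Y *m adjmx X.
Proof.
apply/matrixP => i j; rewrite !mxE rmorph_sum; apply: eq_bigr => k _.
by rewrite !mxE rmorphM mulrC.
Qed.

Lemma adjmx1 m : adjmx (1%:M : 'M[C]_m) = 1%:M.
Proof. by apply/matrixP => i j; rewrite !mxE rmorph_nat eq_sym. Qed.

Lemma adjmx_tens m n p q (X : 'M[C]_(m, n)) (Y : 'M[C]_(p, q)) :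
  adjmx (X *t Y) = adjmx X *t adjmx Y.
Proof. by apply/matrixP => i j; rewrite !mxE rmorphM. Qed.

Lemma mxtrace_adj m (X : 'M[C]_m) : \tr (adjmx X) = (\tr X)^*.
Proof. by rewrite /mxtrace rmorph_sum; apply: eq_bigr => i _; rewrite !mxE. Qed.

Lemma conj_real (x : R) : (x%:C%C : C)^* = x%:C%C.
Proof. exact: conjc_real. Qed.

Lemma hermitian_scale_real m (x : R) (X : 'M[C]_m) :
  is_hermitian X -> is_hermitian (x%:C%C *: X).
Proof. by rewrite /is_hermitian adjmxZ conj_real => ->. Qed.

End Adjoint.

Section PartialTrace.
Variable R : realType.
Local Notation C := R[i].
Variables mA mB : nat.
Implicit Types (Y : 'M[C]_(mA * mB)) (P : 'M[C]_mA) (Q : 'M[C]_mB).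

Lemma tensmx11 : (1%:M : 'M[C]_mA) *t (1%:M : 'M[C]_mB) = 1%:M.
Proof.
apply/matrixP => a b; case: (mxtens_indexP a) => i j; case: (mxtens_indexP b) => k l.
rewrite tensmxE !mxE (inj_eq (can_inj (@mxtens_indexK mA mB))) xpair_eqE.
by case: (i == k); case: (j == l); rewrite /= ?mulr1 ?mulr0 ?mul0r.
Qed.

Lemma mxtrace_mul_ptraceB P Y : \tr ((P *t 1%:M) *m Y) = \tr (P *m ptraceB Y).
Proof.
rewrite /mxtrace big_mxtens_index.
under eq_bigr => i _ do under eq_bigr => k _ do rewrite mxE big_mxtens_index.
under [RHS]eq_bigr => i _ do rewrite mxE.
apply: eq_bigr => i _; rewrite exchange_big /=; apply: eq_bigr => j _.
rewrite mxE mulr_sumr; apply: eq_bigr => k _.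
rewrite (bigD1 k) //= big1 ?addr0 => [|l /negbTE lk]; rewrite tensmxE mxE.
  by rewrite eqxx mulr1.
by rewrite eq_sym lk mulr0 mul0r.
Qed.

Lemma mxtrace_ptraceB Y : \tr (ptraceB Y) = \tr Y.
Proof. by rewrite -[ptraceB Y]mul1mx -mxtrace_mul_ptraceB tensmx11 mul1mx. Qed.

Lemma ptraceBD Y1 Y2 : ptraceB (Y1 + Y2) = ptraceB Y1 + ptraceB Y2.
Proof.
by apply/matrixP => i j; rewrite !mxE -big_split; apply: eq_bigr => k _; rewrite mxE.
Qed.

Lemma ptraceBZ c Y : ptraceB (c *: Y) = c *: ptraceB Y.
Proof.
by apply/matrixP => i j; rewrite !mxE mulr_sumr; apply: eq_bigr => k _; rewrite mxE.
Qed.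

Lemma adjmx_ptraceB Y : adjmx (ptraceB Y) = ptraceB (adjmx Y).
Proof.
by apply/matrixP => i j; rewrite !mxE rmorph_sum; apply: eq_bigr => k _; rewrite !mxE.
Qed.

Lemma mul_1tens_mxE Q Y i k j l :
  ((1%:M *t Q) *m Y) (mxtens_index (i, k)) (mxtens_index (j, l)) =
  \sum_b Q k b * Y (mxtens_index (i, b)) (mxtens_index (j, l)).
Proof.
rewrite mxE big_mxtens_index (bigD1 i) //= [X in _ + X]big1 ?addr0 => [|a /negbTE ai].
  by apply: eq_bigr => b _; rewrite tensmxE mxE eqxx mul1r.
by apply: big1 => b _; rewrite tensmxE mxE eq_sym ai !mul0r.
Qed.

Lemma mul_mx_1tensE Q Y i k j l :
  (Y *m (1%:M *t Q)) (mxtens_index (i, k)) (mxtens_index (j, l)) =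
  \sum_b Y (mxtens_index (i, k)) (mxtens_index (j, b)) * Q b l.
Proof.
rewrite mxE big_mxtens_index (bigD1 j) //= [X in _ + X]big1 ?addr0 => [|a /negbTE aj].
  by apply: eq_bigr => b _; rewrite tensmxE mxE eqxx mul1r.
by apply: big1 => b _; rewrite tensmxE mxE aj mul0r mulr0.
Qed.

Lemma mxtrace_mul_ptraceA Q Y : \tr ((1%:M *t Q) *m Y) = \tr (Q *m ptraceA Y).
Proof.
rewrite /mxtrace big_mxtens_index exchange_big /=.
under eq_bigr => k _ do under eq_bigr => i _ do rewrite mul_1tens_mxE.
apply: eq_bigr => k _; rewrite exchange_big /= mxE.
by apply: eq_bigr => b _; rewrite mxE mulr_sumr.
Qed.

Lemma ptraceB_mul_1tensC Q Y :
  ptraceB (Y *m (1%:M *t Q)) = ptraceB ((1%:M *t Q) *m Y).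
Proof.
apply/matrixP => i j; rewrite !mxE.
under eq_bigr => k _ do rewrite mul_mx_1tensE.
under [RHS]eq_bigr => k _ do rewrite mul_1tens_mxE.
rewrite [RHS]exchange_big /=; apply: eq_bigr => k _; apply: eq_bigr => b _.
by rewrite mulrC.
Qed.

End PartialTrace.

Section InnerProduct.
Variable R : realType.
Local Notation C := R[i].
Variable m : nat.
Implicit Types X Y Z : 'M[C]_m.

Lemma nipC X Y : nip Y X = (nip X Y)^*.
Proof.
rewrite /nip -[X in _ *m X](adjmxK X) -adjmxM mxtrace_adj.
by rewrite rmorphM fmorphV rmorph_nat.
Qed.

Lemma nipDr X Y Z : nip X (Y + Z) = nip X Y + nip X Z.
Proof. by rewrite /nip mulmxDr mxtraceD mulrDr. Qed.

Lemma nipZr X Y c : nip X (c *: Y) = c * nip X Y.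
Proof. by rewrite /nip -scalemxAr mxtraceZ mulrCA. Qed.

Lemma nipBr X Y Z : nip X (Y - Z) = nip X Y - nip X Z.
Proof. by rewrite -scaleN1r nipDr nipZr mulN1r. Qed.

Lemma nipDl X Y Z : nip (Y + Z) X = nip Y X + nip Z X.
Proof. by rewrite nipC nipDr rmorphD /= -!nipC. Qed.

Lemma nipZl X Y c : nip (c *: Y) X = c^* * nip Y X.
Proof. by rewrite nipC nipZr rmorphM /= -nipC. Qed.

Lemma nipBl X Y Z : nip (Y - Z) X = nip Y X - nip Z X.
Proof. by rewrite nipC nipBr rmorphB /= -!nipC. Qed.

Lemma nip0r X : nip X 0 = 0.
Proof. by rewrite /nip mulmx0 linear0 mulr0. Qed.

Lemma nip_self X : nip X X = m%:R^-1 * \sum_i \sum_k `|X k i| ^+ 2.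
Proof.
rewrite /nip /mxtrace; congr (_ * _); apply: eq_bigr => i _.
by rewrite mxE; apply: eq_bigr => k _; rewrite !mxE normCK mulrC.
Qed.

Lemma nip_self_ge0 X : 0 <= nip X X.
Proof.
rewrite nip_self mulr_ge0 ?invr_ge0 ?ler0n //.
by do 2!(apply: sumr_ge0 => ? _); rewrite exprn_ge0.
Qed.

Definition norm2sq X : R := complex.Re (nip X X).

Lemma nip_selfE X : nip X X = (norm2sq X)%:C%C.
Proof. by rewrite RRe_real // ger0_real // nip_self_ge0. Qed.

Lemma norm2sq_ge0 X : 0 <= norm2sq X.
Proof. by rewrite -lecR -nip_selfE nip_self_ge0. Qed.

Lemma norm2'E X : norm2' X = Num.sqrt (norm2sq X).
Proof. by []. Qed.

Lemma sqr_norm2' X : norm2' X ^+ 2 = norm2sq X.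
Proof. exact/sqr_sqrtr/norm2sq_ge0. Qed.

Lemma norm2'_eq1 X : norm2' X = 1 <-> norm2sq X = 1.
Proof. by split => h; [rewrite -sqr_norm2' h expr1n | rewrite norm2'E h sqrtr1]. Qed.

Lemma norm2'0 : norm2' (0 : 'M[C]_m) = 0.
Proof. by rewrite norm2'E /norm2sq nip0r sqrtr0. Qed.

Lemma norm2sq_eq0 X : norm2sq X = 0 -> X = 0.
Proof.
move=> X0; have : nip X X = 0 by rewrite nip_selfE X0.
rewrite nip_self => /eqP; rewrite mulf_eq0 invr_eq0 pnatr_eq0 => /orP[/eqP m0|/eqP S0].
  by apply/matrixP => i; have := leq_trans (ltn_ord i) (eq_leq m0).
have sq_ge0 i k : 0 <= `|X k i| ^+ 2 by rewrite exprn_ge0.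
apply/matrixP => k i; rewrite mxE; apply/eqP; rewrite -normr_eq0 -(sqrf_eq0 _).
have Si0 : \sum_k `|X k i| ^+ 2 = 0.
  by apply: (psumr_eq0P _ S0) => // j _; apply: sumr_ge0.
by rewrite (psumr_eq0P _ Si0).
Qed.

Lemma norm2sqZ (x : R) X : norm2sq (x%:C%C *: X) = x ^+ 2 * norm2sq X.
Proof. by rewrite /norm2sq nipZl nipZr conj_real nip_selfE mulrA -!rmorphM expr2. Qed.

Lemma norm2sq1 : (0 < m)%N -> norm2sq (1%:M : 'M[C]_m) = 1.
Proof.
by move=> m0; rewrite /norm2sq /nip adjmx1 mul1mx mxtrace1 mulVf // pnatr_eq0 -lt0n.
Qed.

End InnerProduct.

Section CauchySchwarz.
Variable R : realType.
Local Notation C := R[i].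
Variable m : nat.
Implicit Types P Y : 'M[C]_m.

Lemma normC_cabs (z : C) : `|z| = (cabs z)%:C%C.
Proof. by rewrite /cabs normc_def. Qed.

Lemma cabs_ge0 (z : C) : 0 <= cabs z.
Proof. by rewrite /cabs normc_def /= sqrtr_ge0. Qed.

Lemma cabs_real (x : R) : cabs x%:C%C = `|x|.
Proof. by rewrite /cabs normc_def /= expr0n addr0 sqrtr_sqr. Qed.

Lemma cabs_nip0r P : cabs (nip P 0) = 0.
Proof. by rewrite nip0r /cabs normr0. Qed.

Lemma cabs_nip_le P Y : norm2' P = 1 -> cabs (nip P Y) <= norm2' Y.
Proof.
move/norm2'_eq1 => P1; set c := nip P Y.
(* Expand [0 <= ||Y - <P, Y> P||^2]. *)
have residual : nip (Y - c *: P) (Y - c *: P) = nip Y Y - c * c^*.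
  rewrite !nipBl !nipBr !nipZl !nipZr (nip_selfE P) P1 -/c (nipC P Y) -/c.
  by rewrite mulr1 [c^* * c]mulrC; ring.
have := nip_self_ge0 (Y - c *: P); rewrite residual subr_ge0 -normCK normC_cabs.
rewrite nip_selfE -rmorphXn lecR => cY.
by rewrite norm2'E -(ger0_norm (cabs_ge0 c)) -sqrtr_sqr ler_sqrt // norm2sq_ge0.
Qed.

Lemma cabs_nip_normalized Y : Y != 0 ->
  let P := ((norm2' Y)^-1)%:C%C *: Y in norm2' P = 1 /\ cabs (nip P Y) = norm2' Y.
Proof.
move=> Y0 P; have Y_gt0 : 0 < norm2' Y.
  rewrite norm2'E sqrtr_gt0 lt_neqAle norm2sq_ge0 andbT eq_sym.
  by apply: contra Y0 => /eqP/norm2sq_eq0 ->.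
have Yn0 : norm2' Y ^+ 2 != 0 by rewrite expf_neq0 // gt_eqF.
split; first by rewrite norm2'_eq1 norm2sqZ -sqr_norm2' exprVn mulVf.
rewrite nipZl conj_real nip_selfE -rmorphM cabs_real -sqr_norm2'.
by rewrite expr2 mulrA mulVf ?gt_eqF // mul1r gtr0_norm.
Qed.

End CauchySchwarz.

Section Hermitian.
Variable R : realType.
Local Notation C := R[i].
Variable m : nat.
Implicit Types A B Q : 'M[C]_m.

Lemma nip_hermitianC A B : is_hermitian A -> is_hermitian B -> nip A B = nip B A.
Proof. by move=> hA hB; rewrite /nip hA hB mxtrace_mulC. Qed.

Lemma norm2sq_hermitianD A B : is_hermitian A -> is_hermitian B ->
  norm2sq (A + 'i *: B) = norm2sq A + norm2sq B.
Proof.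
move=> hA hB; rewrite /norm2sq nipDl !nipDr !nipZl !nipZr conjCi (nip_hermitianC hA hB).
rewrite (nip_selfE A) (nip_selfE B); set n := nip B A.
have i2 : 'i * 'i = -1 :> C by rewrite -expr2 sqrCi.
have -> : (norm2sq A)%:C%C + 'i * n + (- 'i * n + - 'i * ('i * (norm2sq B)%:C%C)) =
          (norm2sq A)%:C%C + (norm2sq B)%:C%C - ('i * 'i + 1) * (norm2sq B)%:C%C by ring.
by rewrite i2 addNr mul0r subr0.
Qed.

Lemma traceless_hermitian_decomposition Q : \tr Q = 0 ->
  exists H1 H2, [/\ is_hermitian H1, is_hermitian H2, \tr H1 = 0, \tr H2 = 0
                  & Q = H1 + 'i *: H2].
Proof.
move=> trQ; exists (2^-1 *: (Q + adjmx Q)), (- ('i / 2) *: (Q - adjmx Q)).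
have conj_half : (2^-1 : C)^* = 2^-1 by rewrite fmorphV rmorph_nat.
split.
- by rewrite /is_hermitian adjmxZ adjmxD adjmxK conj_half addrC.
- rewrite /is_hermitian adjmxZ adjmxB adjmxK rmorphN rmorphM /= conj_half conjCi.
  by rewrite -opprB scalerN -scaleNr opprK mulNr.
- by rewrite mxtraceZ mxtraceD mxtrace_adj trQ rmorph0 addr0 mulr0.
- by rewrite mxtraceZ linearB /= mxtrace_adj trQ rmorph0 subr0 mulr0.
- rewrite scalerA mulrN mulrA -expr2 sqrCi mulN1r opprK -scalerDr addrACA subrr addr0.
  have two : Q + Q = (2 : C) *: Q by rewrite scaler_nat mulr2n.
  by rewrite two scalerA mulVf ?pnatr_eq0 // scale1r.
Qed.

Lemma exists_traceless_hermitian_unit : (1 < m)%N ->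
  exists X : 'M[C]_m, [/\ is_hermitian X, \tr X = 0 & norm2sq X = 1].
Proof.
move=> m_gt1; have m_gt0 : (0 < m)%N := ltnW m_gt1.
pose i0 := Ordinal m_gt0; pose i1 := Ordinal m_gt1.
have delta_herm (i : 'I_m) : adjmx (delta_mx i i : 'M[C]_m) = delta_mx i i.
  by apply/matrixP => a b; rewrite !mxE rmorph_nat andbC.
have tr_delta (i : 'I_m) : \tr (delta_mx i i : 'M[C]_m) = 1.
  rewrite /mxtrace (bigD1 i) //= big1 ?addr0 => [|j /negbTE ji]; rewrite mxE ?eqxx //.
  by rewrite ji.
pose D : 'M[C]_m := delta_mx i0 i0 - delta_mx i1 i1.
have hD : is_hermitian D by rewrite /is_hermitian /D adjmxB !delta_herm.
have D2 : adjmx D *m D = delta_mx i0 i0 + delta_mx i1 i1.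
  rewrite hD /D mulmxBl !mulmxBr !mul_delta_mx !mul_delta_mx_0 //.
  by rewrite subr0 sub0r opprK.
have D_norm2sq : norm2sq D = 2 / m%:R.
  rewrite /norm2sq /nip D2 mxtraceD !tr_delta.
  suff -> : (m%:R : C)^-1 * (1 + 1) = (2 / m%:R)%:C%C by [].
  by rewrite rmorphM rmorphV ?unitfE ?pnatr_eq0 -?lt0n // !rmorph_nat mulrC.
exists ((Num.sqrt (m%:R / 2))%:C%C *: D); split.
- exact: hermitian_scale_real.
- by rewrite mxtraceZ /D linearB /= !tr_delta subrr mulr0.
- rewrite norm2sqZ D_norm2sq sqr_sqrtr ?divr_ge0 ?ler0n //.
  by rewrite mulrA divfK ?pnatr_eq0 // divff // pnatr_eq0 -lt0n.
Qed.

End Hermitian.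

Section MarkovOperator.
Variable R : realType.
Local Notation C := R[i].
Variables (mA mB : nat) (psi : 'M[C]_(mA * mB)).
Implicit Types (P : 'M[C]_mA) (Q : 'M[C]_mB).

Lemma markovTD Q1 Q2 : markovT psi (Q1 + Q2) = markovT psi Q1 + markovT psi Q2.
Proof.
have tensD : 1%:M *t (Q1 + Q2) = 1%:M *t Q1 + (1%:M : 'M[C]_mA) *t Q2.
  by apply/matrixP => i j; rewrite !mxE mulrDr.
by rewrite /markovT tensD mulmxDl ptraceBD scalerDr.
Qed.

Lemma markovTZ c Q : markovT psi (c *: Q) = c *: markovT psi Q.
Proof.
have tensZ : 1%:M *t (c *: Q) = c *: ((1%:M : 'M[C]_mA) *t Q).
  by apply/matrixP => i j; rewrite !mxE mulrCA.
by rewrite /markovT tensZ -scalemxAl ptraceBZ !scalerA mulrC.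
Qed.

Lemma markovT0 : markovT psi 0 = 0.
Proof. by have := markovTZ 0 0; rewrite !scale0r. Qed.

Lemma corrE P Q : (0 < mA)%N -> corr psi P Q = nip P (markovT psi Q).
Proof.
move=> mA_gt0; rewrite /corr /nip /markovT -scalemxAr mxtraceZ mulrA mulVf ?mul1r.
  by rewrite -mxtrace_mul_ptraceB mulmxA tensmx_mul mulmx1 mul1mx.
by rewrite pnatr_eq0 -lt0n.
Qed.

Lemma mxtrace_markovT Q : \tr (markovT psi Q) = mA%:R * \tr (Q *m ptraceA psi).
Proof. by rewrite /markovT mxtraceZ mxtrace_ptraceB mxtrace_mul_ptraceA. Qed.

Lemma corr_markovT_max Q : (0 < mA)%N ->
  [/\ (forall P, norm2' P = 1 -> cabs (corr psi P Q) <= norm2' (markovT psi Q)),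
      (exists P, norm2' P = 1 /\ cabs (corr psi P Q) = norm2' (markovT psi Q))
    & (markovT psi Q != 0 ->
         let Pstar := ((norm2' (markovT psi Q))^-1)%:C%C *: markovT psi Q in
         norm2' Pstar = 1 /\ cabs (corr psi Pstar Q) = norm2' (markovT psi Q))].
Proof.
move=> mA_gt0; have Pstar_opt : markovT psi Q != 0 ->
    let Pstar := ((norm2' (markovT psi Q))^-1)%:C%C *: markovT psi Q in
    norm2' Pstar = 1 /\ cabs (corr psi Pstar Q) = norm2' (markovT psi Q).
  by move=> TQ_neq0 Pstar; rewrite corrE //; apply: cabs_nip_normalized.
split=> //; first by move=> P P1; rewrite corrE //; apply: cabs_nip_le.
have [TQ0 | /Pstar_opt] := eqVneq (markovT psi Q) 0; first last.
  by move=> Pstar_unit; eexists; exact: Pstar_unit.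
by exists 1%:M; rewrite norm2'_eq1 norm2sq1 // corrE // TQ0 cabs_nip0r norm2'0.
Qed.

Lemma markovT_traceless Q : ptraceA psi = mB%:R^-1 *: 1%:M -> \tr Q = 0 ->
  \tr (markovT psi Q) = 0.
Proof.
by move=> psiB trQ; rewrite mxtrace_markovT psiB -scalemxAr mulmx1 mxtraceZ trQ !mulr0.
Qed.

Hypothesis psi_herm : is_hermitian psi.

Lemma markovT_hermitian Q : is_hermitian Q -> is_hermitian (markovT psi Q).
Proof.
rewrite /is_hermitian /markovT => hQ.
rewrite adjmxZ rmorph_nat adjmx_ptraceB adjmxM psi_herm adjmx_tens adjmx1 hQ.
by rewrite ptraceB_mul_1tensC.
Qed.

End MarkovOperator.

Section ComplexContinuity.
Variables (R : realType) (T : topologicalType).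
Local Notation C := R[i].

Definition ccontinuous (f : T -> C) :=
  continuous (fun z => complex.Re (f z)) /\ continuous (fun z => complex.Im (f z)).

Lemma eq_ccontinuous (f g : T -> C) : f =1 g -> ccontinuous f -> ccontinuous g.
Proof. by move=> /funext ->. Qed.

Lemma ccontinuous_cst (c : C) : ccontinuous (fun _ => c).
Proof. by split; apply: cst_continuous. Qed.

Lemma ccontinuous_complex (re im : T -> R) :
  continuous re -> continuous im -> ccontinuous (fun z => (re z +i* im z)%C).
Proof. by []. Qed.

Lemma ccontinuousD (f g : T -> C) :
  ccontinuous f -> ccontinuous g -> ccontinuous (fun z => f z + g z).
Proof.
move=> [f1 f2] [g1 g2]; split.
- have -> : (fun z => complex.Re (f z + g z)) = (fun z => complex.Re (f z) + complex.Re (g z)).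
    by apply: funext => z; case: (f z); case: (g z).
  by move=> x; exact: continuousD (f1 x) (g1 x).
- have -> : (fun z => complex.Im (f z + g z)) = (fun z => complex.Im (f z) + complex.Im (g z)).
    by apply: funext => z; case: (f z); case: (g z).
  by move=> x; exact: continuousD (f2 x) (g2 x).
Qed.

Lemma ccontinuousM (f g : T -> C) :
  ccontinuous f -> ccontinuous g -> ccontinuous (fun z => f z * g z).
Proof.
move=> [f1 f2] [g1 g2]; split.
- have -> : (fun z => complex.Re (f z * g z)) = (fun z =>
      complex.Re (f z) * complex.Re (g z) - complex.Im (f z) * complex.Im (g z)).
    by apply: funext => z; case: (f z); case: (g z).
  by move=> x; exact: continuousB (continuousM (f1 x) (g1 x)) (continuousM (f2 x) (g2 x)).
- have -> : (fun z => complex.Im (f z * g z)) = (fun z =>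
      complex.Re (f z) * complex.Im (g z) + complex.Im (f z) * complex.Re (g z)).
    by apply: funext => z; case: (f z); case: (g z).
  by move=> x; exact: continuousD (continuousM (f1 x) (g2 x)) (continuousM (f2 x) (g1 x)).
Qed.

Lemma ccontinuous_conj (f : T -> C) : ccontinuous f -> ccontinuous (fun z => (f z)^*).
Proof.
move=> [f1 f2]; split.
- have -> : (fun z => complex.Re (f z)^* ) = (fun z => complex.Re (f z)).
    by apply: funext => z; case: (f z).
  by [].
- have -> : (fun z => complex.Im (f z)^* ) = (fun z => - complex.Im (f z)).
    by apply: funext => z; case: (f z).
  by move=> x; exact: continuousN (f2 x).
Qed.

Lemma ccontinuous_sum I (r : seq I) (P : pred I) (F : I -> T -> C) :
  (forall i, ccontinuous (F i)) -> ccontinuous (fun z => \sum_(i <- r | P i) F i z).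
Proof.
move=> F_cont; elim: r => [|a r IH].
  by apply: (eq_ccontinuous (f := fun _ => 0)) (ccontinuous_cst 0) => z; rewrite big_nil.
apply: (eq_ccontinuous (f := fun z => (if P a then F a z else 0) + \sum_(i <- r | P i) F i z)).
  by move=> z; rewrite big_cons; case: (P a); rewrite ?add0r.
by apply: ccontinuousD => //; case: (P a) => //; apply: ccontinuous_cst.
Qed.

Definition mxcontinuous p q (F : T -> 'M[C]_(p, q)) :=
  forall i j, ccontinuous (fun z => F z i j).

Lemma mxcontinuous_cst p q (M : 'M[C]_(p, q)) : mxcontinuous (fun _ => M).
Proof. by move=> i j; apply: ccontinuous_cst. Qed.

Lemma mxcontinuous_mulmx p q r (F : T -> 'M[C]_(p, q)) (G : T -> 'M[C]_(q, r)) :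
  mxcontinuous F -> mxcontinuous G -> mxcontinuous (fun z => F z *m G z).
Proof.
move=> F_cont G_cont i j; apply: (eq_ccontinuous (f := fun z => \sum_k F z i k * G z k j)).
  by move=> z; rewrite mxE.
by apply: ccontinuous_sum => k; apply: ccontinuousM.
Qed.

Lemma mxcontinuousZ p q (c : C) (F : T -> 'M[C]_(p, q)) :
  mxcontinuous F -> mxcontinuous (fun z => c *: F z).
Proof.
move=> F_cont i j; apply: (eq_ccontinuous (f := fun z => c * F z i j)).
  by move=> z; rewrite mxE.
exact/ccontinuousM/F_cont/ccontinuous_cst.
Qed.

Lemma mxcontinuous_adj p q (F : T -> 'M[C]_(p, q)) :
  mxcontinuous F -> mxcontinuous (fun z => adjmx (F z)).
Proof.
move=> F_cont i j; apply: (eq_ccontinuous (f := fun z => (F z j i)^* )).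
  by move=> z; rewrite !mxE.
exact: ccontinuous_conj.
Qed.

Lemma mxcontinuous_tens p q r s (F : T -> 'M[C]_(p, q)) (G : T -> 'M[C]_(r, s)) :
  mxcontinuous F -> mxcontinuous G -> mxcontinuous (fun z => F z *t G z).
Proof.
move=> F_cont G_cont i j; apply: (eq_ccontinuous (f := fun z =>
    F z (mxtens_unindex i).1 (mxtens_unindex j).1 * G z (mxtens_unindex i).2 (mxtens_unindex j).2)).
  by move=> z; rewrite !mxE.
exact: ccontinuousM.
Qed.

Lemma mxcontinuous_ptraceB p q (F : T -> 'M[C]_(p * q)) :
  mxcontinuous F -> mxcontinuous (fun z => ptraceB (F z)).
Proof.
move=> F_cont i j; apply: (eq_ccontinuous (f := fun z =>
    \sum_(k < q) F z (mxtens_index (i, k)) (mxtens_index (j, k)))).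
  by move=> z; rewrite !mxE.
exact: ccontinuous_sum.
Qed.

Lemma ccontinuous_mxtrace p (F : T -> 'M[C]_p) :
  mxcontinuous F -> ccontinuous (fun z => \tr (F z)).
Proof. by move=> F_cont; apply: ccontinuous_sum. Qed.

Lemma ccontinuous_nip p (F G : T -> 'M[C]_p) :
  mxcontinuous F -> mxcontinuous G -> ccontinuous (fun z => nip (F z) (G z)).
Proof.
move=> F_cont G_cont; apply/ccontinuousM/ccontinuous_mxtrace/mxcontinuous_mulmx => //.
  exact: ccontinuous_cst.
exact: mxcontinuous_adj.
Qed.

Lemma mxcontinuous_markovT mA mB (psi : 'M[C]_(mA * mB)) (F : T -> 'M[C]_mB) :
  mxcontinuous F -> mxcontinuous (fun z => markovT psi (F z)).
Proof.
move=> F_cont; apply/mxcontinuousZ/mxcontinuous_ptraceB/mxcontinuous_mulmx.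
  exact/mxcontinuous_tens/F_cont/mxcontinuous_cst.
exact: mxcontinuous_cst.
Qed.

End ComplexContinuity.

Definition markov_maximizer (R : realType) mA mB (psi : 'M[R[i]]_(mA * mB))
    (Q : 'M[R[i]]_mB) :=
  [/\ \tr Q = 0, norm2sq Q = 1 &
      forall Q', \tr Q' = 0 -> norm2sq Q' = 1 ->
        norm2sq (markovT psi Q') <= norm2sq (markovT psi Q)].

Section Compactness.
Local Open Scope classical_set_scope.
Variable R : realType.
Local Notation C := R[i].

Lemma norm2sq_ReIm m (X : 'M[C]_m) : norm2sq X =
  m%:R^-1 * \sum_i \sum_k (complex.Re (X k i) ^+ 2 + complex.Im (X k i) ^+ 2).
Proof.
rewrite /norm2sq nip_self.
under eq_bigr => i _ do under eq_bigr => k _ do rewrite -add_Re2_Im2.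
set S := (X in _ = _ * X).
suff -> : m%:R^-1 * \sum_i \sum_k (complex.Re (X k i) ^+ 2 + complex.Im (X k i) ^+ 2)%:C%C
          = (m%:R^-1 * S)%:C%C :> C by [].
rewrite rmorphM fmorphV rmorph_nat rmorph_sum; congr (_ * _).
by apply: eq_bigr => i _; rewrite rmorph_sum.
Qed.

Variables (mA mB : nat) (psi : 'M[C]_(mA * mB)).
Hypothesis mB_gt1 : (1 < mB)%N.
Local Notation N := (mB * mB)%N.
Local Notation V := 'rV[R]_(N + N).

(* Compactness is available for real row vectors: a matrix is stored as the real
   parts of its entries followed by their imaginary parts. *)
Definition mx_of_rV (z : V) : 'M[C]_mB := \matrix_(i, j)
  (z 0 (lshift N (mxtens_index (i, j))) +i* z 0 (rshift N (mxtens_index (i, j))))%C.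

Definition rV_of_mx (Q : 'M[C]_mB) : V :=
  row_mx (\row_k complex.Re (Q (mxtens_unindex k).1 (mxtens_unindex k).2))
         (\row_k complex.Im (Q (mxtens_unindex k).1 (mxtens_unindex k).2)).

Lemma rV_of_mxK : cancel rV_of_mx mx_of_rV.
Proof.
move=> Q; apply/matrixP => i j.
by rewrite mxE row_mxEl row_mxEr !mxE mxtens_indexK /=; case: (Q i j).
Qed.

Lemma mxcontinuous_mx_of_rV : mxcontinuous mx_of_rV.
Proof.
move=> i j; apply: (eq_ccontinuous (f := fun z : V =>
  (z 0 (lshift N (mxtens_index (i, j))) +i* z 0 (rshift N (mxtens_index (i, j))))%C)).
  by move=> z; rewrite mxE.
by apply: ccontinuous_complex; apply: coord_continuous.
Qed.

Lemma sumsq_mx_of_rV (z : V) : \sum_t z 0 t ^+ 2 = mB%:R * norm2sq (mx_of_rV z).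
Proof.
rewrite norm2sq_ReIm mulrA divff ?pnatr_eq0 -?lt0n ?(ltnW mB_gt1) // mul1r.
rewrite big_split_ord /= !big_mxtens_index -big_split /= [RHS]exchange_big /=.
by apply: eq_bigr => i _; rewrite -big_split; apply: eq_bigr => k _; rewrite !mxE.
Qed.

Lemma mx_of_rV_bounded (z : V) t : norm2sq (mx_of_rV z) = 1 -> - mB%:R <= z 0 t <= mB%:R.
Proof.
move=> z1; have zt2 : z 0 t ^+ 2 <= mB%:R.
  have := sumsq_mx_of_rV z; rewrite z1 mulr1 => <-; rewrite (bigD1 t) //= lerDl.
  by apply: sumr_ge0 => s _; rewrite sqr_ge0.
have mB_ge1 : (1 : R) <= mB%:R by rewrite ler1n ltnW.
by apply/andP; split; nra.
Qed.

Lemma exists_markov_maximizer : exists Q, markov_maximizer psi Q.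
Proof.
pose tr_re z := complex.Re (\tr (mx_of_rV z)).
pose tr_im z := complex.Im (\tr (mx_of_rV z)).
pose nsq z := norm2sq (mx_of_rV z).
pose f z := norm2sq (markovT psi (mx_of_rV z)).
have [tr_re_cont tr_im_cont] := ccontinuous_mxtrace mxcontinuous_mx_of_rV.
have nsq_cont : continuous nsq := (ccontinuous_nip mxcontinuous_mx_of_rV mxcontinuous_mx_of_rV).1.
have f_cont : continuous f :=
  (ccontinuous_nip (mxcontinuous_markovT psi mxcontinuous_mx_of_rV)
                   (mxcontinuous_markovT psi mxcontinuous_mx_of_rV)).1.
pose K := tr_re @^-1` [set 0] `&` tr_im @^-1` [set 0] `&` nsq @^-1` [set 1].
have closed_level (g : V -> R) (a : R) : continuous g -> closed (g @^-1` [set a]).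
  by move=> g_cont; apply: preimage_closed => [x _|]; [apply: g_cont | apply: closed_eq].
have K_closed : closed K by do 2?apply: closedI; apply: closed_level.
pose M : R := mB%:R.
have box_compact : compact [set v : V | forall i, `[- M, M]%classic (v ord0 i)].
  by apply: (@rV_compact _ _ (fun=> `[- M, M]%classic)) => i; exact: segment_compact.
have K_compact : compact K.
  apply: subclosed_compact K_closed box_compact _.
  by move=> z [_ z1] i /=; rewrite in_itv /=; apply: mx_of_rV_bounded.
have K_rV_of_mx Q : \tr Q = 0 -> norm2sq Q = 1 -> K (rV_of_mx Q).
  by move=> trQ Q1; rewrite /K /= /tr_re /tr_im /nsq rV_of_mxK trQ Q1.
have [X [_ trX X1]] := exists_traceless_hermitian_unit R mB_gt1.
have [|c Kc c_max] := EVT_max_rV _ K_compact (continuous_subspaceT f_cont).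
  by exists (rV_of_mx X); apply: K_rV_of_mx.
move: Kc; rewrite inE => -[[trc_re trc_im] c1].
exists (mx_of_rV c); split.
- by apply/eqP; rewrite eq_complex /= -/(tr_re c) -/(tr_im c) trc_re trc_im !eqxx.
- exact: c1.
- move=> Q trQ Q1; have := c_max (rV_of_mx Q); rewrite /f rV_of_mxK; apply.
  by rewrite inE; apply: K_rV_of_mx.
Qed.

End Compactness.

Section HermitianMaximizer.
Variable R : realType.
Local Notation C := R[i].
Variables (mA mB : nat) (psi : 'M[C]_(mA * mB)).
Hypothesis psi_herm : is_hermitian psi.
Variable Q0 : 'M[C]_mB.
Hypothesis Q0_max : markov_maximizer psi Q0.
Local Notation r := (norm2sq (markovT psi Q0)).

Lemma norm2sq_markovT_le H : \tr H = 0 -> norm2sq (markovT psi H) <= r * norm2sq H.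
Proof.
have [_ _ Q0_ub] := Q0_max; move=> trH.
have [H0 | H_neq0] := eqVneq (norm2sq H) 0.
  by rewrite H0 mulr0 (norm2sq_eq0 H0) markovT0 /norm2sq nip0r.
have H_gt0 : 0 < norm2sq H by rewrite lt_neqAle eq_sym H_neq0 norm2sq_ge0.
set s := Num.sqrt (norm2sq H); have s2 : s ^+ 2 = norm2sq H by rewrite sqr_sqrtr ?ltW.
have s_neq0 : s ^+ 2 != 0 by rewrite s2 gt_eqF.
have := Q0_ub ((s^-1)%:C%C *: H).
rewrite mxtraceZ trH mulr0 markovTZ !norm2sqZ exprVn s2 mulVf // => /(_ erefl erefl).
by rewrite -(ler_pM2l H_gt0) mulrA mulfV ?gt_eqF // mul1r mulrC.
Qed.

Lemma markov_maximizer_normalize H : \tr H = 0 -> 0 < norm2sq H ->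
  norm2sq (markovT psi H) = r * norm2sq H ->
  markov_maximizer psi ((Num.sqrt (norm2sq H))^-1%:C%C *: H).
Proof.
have [_ _ Q0_ub] := Q0_max; move=> trH H_gt0 TH.
have s2 : (Num.sqrt (norm2sq H))^-1 ^+ 2 * norm2sq H = 1.
  by rewrite exprVn sqr_sqrtr ?ltW // mulVf ?gt_eqF.
split; first by rewrite mxtraceZ trH mulr0.
  by rewrite norm2sqZ s2.
move=> Q trQ Q1; rewrite markovTZ norm2sqZ [in X in _ <= X]TH mulrCA s2 mulr1.
exact: Q0_ub trQ Q1.
Qed.

Lemma exists_hermitian_markov_maximizer :
  exists Q, is_hermitian Q /\ markov_maximizer psi Q.
Proof.
have [trQ0 Q0_1 _] := Q0_max.
have [H1 [H2 [herm1 herm2 tr1 tr2 Q0E]]] := traceless_hermitian_decomposition trQ0.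
have split_Q0 : norm2sq H1 + norm2sq H2 = 1 by rewrite -norm2sq_hermitianD // -Q0E.
have split_TQ0 : r = norm2sq (markovT psi H1) + norm2sq (markovT psi H2).
  by rewrite Q0E markovTD markovTZ norm2sq_hermitianD //; apply: markovT_hermitian.
have le1 := norm2sq_markovT_le tr1; have le2 := norm2sq_markovT_le tr2.
(* The two bounds add up to the equality [r = r * (||H1||^2 + ||H2||^2)]. *)
have /andP[/eqP TH1 /eqP TH2] : (norm2sq (markovT psi H1) == r * norm2sq H1) &&
                               (norm2sq (markovT psi H2) == r * norm2sq H2).
  by rewrite -(leifD (leif_eq le1) (leif_eq le2)).2 -split_TQ0 -mulrDr split_Q0 mulr1.
have [H1_gt0 | H1_le0] := ltrP 0 (norm2sq H1).
  exists ((Num.sqrt (norm2sq H1))^-1%:C%C *: H1); split; first exact: hermitian_scale_real.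
  exact: markov_maximizer_normalize tr1 H1_gt0 TH1.
have H2_gt0 : 0 < norm2sq H2.
  have H1_0 : norm2sq H1 = 0 by apply/le_anti; rewrite H1_le0 norm2sq_ge0.
  by move: split_Q0; rewrite H1_0 add0r => ->; exact: ltr01.
exists ((Num.sqrt (norm2sq H2))^-1%:C%C *: H2); split; first exact: hermitian_scale_real.
exact: markov_maximizer_normalize tr2 H2_gt0 TH2.
Qed.

End HermitianMaximizer.

Lemma exists_hermitian_corr_witness (R : realType) mA mB (psi : 'M[R[i]]_(mA * mB))
    (Q : 'M[R[i]]_mB) :
  (1 < mA)%N -> is_hermitian psi -> ptraceA psi = mB%:R^-1 *: 1%:M ->
  is_hermitian Q -> \tr Q = 0 ->
  exists P, [/\ is_hermitian P, \tr P = 0, norm2' P = 1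
              & cabs (corr psi P Q) = norm2' (markovT psi Q)].
Proof.
move=> mA_gt1 psi_herm psiB Q_herm trQ; have mA_gt0 := ltnW mA_gt1.
have [TQ0 | TQ_neq0] := eqVneq (markovT psi Q) 0.
  have [P [P_herm trP P1]] := exists_traceless_hermitian_unit R mA_gt1.
  exists P; split; [exact: P_herm | exact: trP | exact/norm2'_eq1 |].
  by rewrite corrE // TQ0 cabs_nip0r norm2'0.
have [_ _ /(_ TQ_neq0) [Pstar1 corr_Pstar]] := corr_markovT_max psi Q mA_gt0.
exists ((norm2' (markovT psi Q))^-1%:C%C *: markovT psi Q); split.
- exact/hermitian_scale_real/markovT_hermitian.
- by rewrite mxtraceZ markovT_traceless // mulr0.
- exact: Pstar1.
- exact: corr_Pstar.
Qed.

Lemma sup_eq_max (R : realType) (E : set R) x :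
  E x -> (forall y, E y -> y <= x) -> sup E = x.
Proof.
move=> Ex x_ub; apply/le_anti/andP; split; first by apply: ge_sup => //; exists x.
by apply: sup_upper_bound => //; split; exists x.
Qed.

Unset Implicit Arguments.
Theorem proposition3p10 (R : realType) (mA mB : nat)
  (hA : (1 < mA)%N) (hB : (1 < mB)%N) (psi : 'M[R[i]]_(mA * mB))
  (hpsi : is_state psi)
  (hpsiA : ptraceB psi = (mA%:R)^-1 *: 1%:M)
  (hpsiB : ptraceA psi = (mB%:R)^-1 *: 1%:M) :
  (forall Q : 'M[R[i]]_mB,
     [/\ (forall P : 'M[R[i]]_mA, norm2' P = 1 ->
            cabs (corr psi P Q) <= norm2' (markovT psi Q)),
         (exists P : 'M[R[i]]_mA, norm2' P = 1 /\
            cabs (corr psi P Q) = norm2' (markovT psi Q))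
       & (markovT psi Q != 0 ->
            let Pstar := (((norm2' (markovT psi Q))^-1)%:C)%C *: markovT psi Q in
            norm2' Pstar = 1 /\ cabs (corr psi Pstar Q) = norm2' (markovT psi Q))])
  /\ (exists Q0 : 'M[R[i]]_mB,
        [/\ \tr Q0 = 0, norm2' Q0 = 1, maxcorr psi = norm2' (markovT psi Q0)
          & forall Q : 'M[R[i]]_mB, \tr Q = 0 -> norm2' Q = 1 ->
              norm2' (markovT psi Q) <= maxcorr psi])
  /\ (exists (P : 'M[R[i]]_mA) (Q : 'M[R[i]]_mB),
        [/\ is_hermitian P, is_hermitian Q, \tr P = 0 /\ \tr Q = 0,
            norm2' P = 1 /\ norm2' Q = 1
          & cabs (corr psi P Q) = maxcorr psi]).
Proof.
have mA_gt0 : (0 < mA)%N := ltnW hA.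
have psi_herm : is_hermitian psi by case: hpsi => -[].
have [Q0 Q0_max] := exists_markov_maximizer psi hB.
have [Q [Q_herm [trQ Q1 Q_ub]]] := exists_hermitian_markov_maximizer psi_herm Q0_max.
have [P [P_herm trP P1 PQ]] := exists_hermitian_corr_witness hA psi_herm hpsiB Q_herm trQ.
have TQ_ub Q' : \tr Q' = 0 -> norm2' Q' = 1 ->
    norm2' (markovT psi Q') <= norm2' (markovT psi Q).
  by move=> trQ' /norm2'_eq1 Q'1; apply/ler_wsqrtr/Q_ub.
have maxcorrE : maxcorr psi = norm2' (markovT psi Q).
  apply: sup_eq_max => [|_ [P' [Q' [_ trQ' P'1 Q'1 ->]]]].
    exists P, Q; split; [exact: trP | exact: trQ | exact: P1 | exact/norm2'_eq1 | exact/esym/PQ].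
  have [corr_le _ _] := corr_markovT_max psi Q' mA_gt0.
  exact: le_trans (corr_le _ P'1) (TQ_ub _ trQ' Q'1).
split=> [Q'|]; first exact: corr_markovT_max.
split.
  exists Q; split; [exact: trQ | exact/norm2'_eq1 | exact: maxcorrE |].
  by move=> Q' trQ' Q'1; rewrite maxcorrE; apply: TQ_ub.
exists P, Q; rewrite maxcorrE; split; [exact: P_herm | exact: Q_herm | | | exact: PQ].
  by split; [exact: trP | exact: trQ].
by split; [exact: P1 | exact/norm2'_eq1].
Qed.
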